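(* Let $T$ be a tree on $n\ge 2$ vertices. Then ${\rm mvr}(\overline{T})=2$ if $T=K_{1,n-1}$ (a star), and ${\rm mvr}(\overline{T})=3$ otherwise.
   Context: All graphs are finite and simple; $\overline{G}$ denotes the complement of $G$. An orthogonal vector representation of a graph $G=(V,E)$ in $\mathbb{R}^d$ is a map $\phi:V\to\mathbb{R}^d$ with $\phi(v)\neq 0$ for all $v$, and for distinct $u,v$: $\langle\phi(u),\phi(v)\rangle=0$ if and only if $uv\notin E$. ${\rm mvr}(G)$ is the smallest $d$ for which such a representation exists. *)

From HB Require Import structures.
From mathcomp Require Import all_boot all_order all_algebra.
From mathcomp Require Import Rstruct.
From Stdlib Require Rdefinitions.
Set Implicit Arguments. Unset Strict Implicit. Unset Printing Implicit Defensive.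
Import Order.TTheory GRing.Theory Num.Theory.
Local Open Scope ring_scope.

Definition simple_graph (V : finType) (e : rel V) : Prop :=
  symmetric e /\ irreflexive e.

Definition compl (V : finType) (e : rel V) : rel V :=
  [rel x y | (x != y) && ~~ e x y].

Definition connected_graph (V : finType) (e : rel V) : Prop :=
  forall x y : V, connect e x y.
Definition acyclic_graph (V : finType) (e : rel V) : Prop :=
  forall c : seq V, (3 <= size c)%nat -> ~~ ucycleb e c.
Definition is_tree (V : finType) (e : rel V) : Prop :=
  connected_graph e /\ acyclic_graph e.

(* G is (isomorphic to) the star K_{1,|V|-1}: some centre c such that
   the edges are exactly the pairs {c, v} with v <> c. *)
Definition is_star (V : finType) (e : rel V) : Prop :=
  exists c : V, forall u v : V, e u v = (u != v) && ((u == c) || (v == c)).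

Definition dotR (d : nat) (x y : 'rV[Rdefinitions.R]_d) : Rdefinitions.R := \sum_(i < d) x 0 i * y 0 i.

Definition orth_rep (V : finType) (e : rel V) (d : nat) (phi : V -> 'rV[Rdefinitions.R]_d)
  : Prop :=
  (forall v, phi v != 0) /\
  (forall u v, u != v -> (dotR (phi u) (phi v) == 0) = ~~ e u v).

Definition has_orth_rep (V : finType) (e : rel V) (d : nat) : Prop :=
  exists phi : V -> 'rV[Rdefinitions.R]_d, orth_rep e phi.

Definition mvr_eq (V : finType) (e : rel V) (k : nat) : Prop :=
  has_orth_rep e k /\ (forall d, has_orth_rep e d -> (k <= d)%N).

(* A star has complement K_1 + K_{n-1}, represented in R^2 by one unit vector for
   the centre and an orthogonal one for the leaves; an edge uv of the tree forces
   phi u and phi v to be orthogonal, which is impossible in dimension 1.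
   In R^2 two vectors orthogonal to a common nonzero vector are parallel.  Hence,
   in a representation of the complement of a tree, orthogonality propagates along
   the edges and every vertex is orthogonal to u or to v; unless u or v is the
   centre of a star this yields a 4-cycle u v p q.
   In R^3 the representation is built leaf by leaf, keeping the images pairwise
   non-parallel: the vector of a new leaf is taken on a line in the plane
   orthogonal to its neighbour's vector, avoiding the finitely many points where it
   would be orthogonal or parallel to another image. *)

From mathcomp Require Import all_boot all_order all_algebra.
From mathcomp Require Import Rstruct ring lra zify.
From Stdlib Require Import Classical.
Set Implicit Arguments. Unset Strict Implicit. Unset Printing Implicit Defensive.
Import Order.TTheory GRing.Theory Num.Theory.
Local Open Scope ring_scope.

Local Notation R := Rdefinitions.R.

Lemma exists_notin (r : seq R) : exists t, t \notin r.
Proof.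
suff lt_bound x : x \in r -> x < 1 + \sum_(y <- r) `|y|.
  by exists (1 + \sum_(y <- r) `|y|); apply/negP => /lt_bound; rewrite ltxx.
elim: r => [//|y r IH]; rewrite inE big_cons => /orP[/eqP->|/IH x_lt].
- have : 0 <= \sum_(z <- r) `|z| by rewrite sumr_ge0.
  by have := ler_norm y; lra.
- have := normr_ge0 y; lra.
Qed.

Lemma finite_roots_of_uniq (P : R -> Prop) :
  (forall t1 t2, P t1 -> P t2 -> t1 = t2) -> exists r : seq R, forall t, P t -> t \in r.
Proof.
move=> uniqP; have [[t0 Pt0]|noP] := classic (exists t, P t).
- by exists [:: t0] => t Pt; rewrite inE (uniqP _ _ Pt Pt0).
- by exists [::] => t Pt; case: noP; exists t.
Qed.

Lemma exists_avoiding (I : finType) (P : I -> R -> Prop) :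
  (forall i, exists r : seq R, forall t, P i t -> t \in r) -> exists t, forall i, ~ P i t.
Proof.
move=> finP.
suff [r covr] : exists r : seq R, forall i, i \in enum I -> forall t, P i t -> t \in r.
  have [t tr] := exists_notin r; exists t => i Pit.
  by have := covr i; rewrite mem_enum => /(_ isT t Pit) tr'; rewrite tr' in tr.
elim: (enum I) => [|i s [r covr]]; first by exists [::].
have [ri covi] := finP i; exists (ri ++ r) => j; rewrite inE.
by case/orP => [/eqP-> t /covi|/covr cov t /cov] tin; rewrite mem_cat tin ?orbT.
Qed.

Lemma affine_eq0 (K : fieldType) (M : lmodType K) (p q : M) (t1 t2 : K) :
  t1 != t2 -> p + t1 *: q = 0 -> p + t2 *: q = 0 -> p = 0 /\ q = 0.
Proof.
move=> t12 E1 E2.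
have /eqP : (t1 - t2) *: q = 0.
  by apply/eqP; rewrite scalerBl subr_eq0 -(inj_eq (addrI p)) E1 E2.
rewrite scaler_eq0 subr_eq0 (negbTE t12) => /eqP q0.
by move: E1; rewrite q0 scaler0 addr0.
Qed.

Lemma dotRC d (x y : 'rV[R]_d) : dotR x y = dotR y x.
Proof. by apply: eq_bigr => i _; rewrite mulrC. Qed.

Lemma dotR0 d (x : 'rV[R]_d) : dotR 0 x = 0.
Proof. by rewrite /dotR big1 // => i _; rewrite mxE mul0r. Qed.

Lemma dotR_combl d (x y z : 'rV[R]_d) (t : R) :
  dotR (x + t *: y) z = dotR x z + t * dotR y z.
Proof.
by rewrite /dotR mulr_sumr -big_split; apply: eq_bigr => i _; rewrite !mxE mulrDl mulrA.
Qed.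

Lemma dotR_self_eq0 d (x : 'rV[R]_d) : (dotR x x == 0) = (x == 0).
Proof.
apply/idP/eqP => [/eqP x0|->]; last by rewrite dotR0.
apply/rowP => i; rewrite mxE; apply/eqP; rewrite -sqrf_eq0 expr2; apply/eqP.
by apply: (psumr_eq0P _ x0) => // j _; rewrite -expr2 sqr_ge0.
Qed.

Definition vec3 (a b c : R) : 'rV[R]_3 := \row_(i < 3) nth 0 [:: a; b; c] i.

Definition cross (x y : 'rV[R]_3) : 'rV[R]_3 :=
  vec3 (x 0 1 * y 0 2 - x 0 2 * y 0 1) (x 0 2 * y 0 0 - x 0 0 * y 0 2)
       (x 0 0 * y 0 1 - x 0 1 * y 0 0).

Lemma rV3P (x y : 'rV[R]_3) : x 0 0 = y 0 0 -> x 0 1 = y 0 1 -> x 0 2 = y 0 2 -> x = y.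
Proof.
move=> E0 E1 E2; apply/rowP => -[[|[|[|//]]] lt_i3].
- by rewrite (_ : Ordinal lt_i3 = 0) //; apply: val_inj.
- by rewrite (_ : Ordinal lt_i3 = 1) //; apply: val_inj.
- by rewrite (_ : Ordinal lt_i3 = 2) //; apply: val_inj.
Qed.

Lemma vec3_eq0 a b c : (vec3 a b c == 0) = [&& a == 0, b == 0 & c == 0].
Proof.
apply/eqP/and3P => [/rowP E|[/eqP-> /eqP-> /eqP->]]; last by apply: rV3P; rewrite !mxE.
by move: (E 0) (E 1) (E 2); rewrite !mxE /= => -> -> ->.
Qed.

Lemma dotR3E (x y : 'rV[R]_3) : dotR x y = x 0 0 * y 0 0 + x 0 1 * y 0 1 + x 0 2 * y 0 2.
Proof.
rewrite /dotR !big_ord_recr big_ord0 /= add0r.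
by congr (_ * _ + _ * _ + _ * _); congr (_ 0 _); apply: val_inj.
Qed.

Lemma cross_anti x y : cross y x = - cross x y.
Proof. by apply: rV3P; rewrite !mxE /=; ring. Qed.

Lemma cross_combl (b c w : 'rV[R]_3) t : cross (b + t *: c) w = cross b w + t *: cross c w.
Proof. by apply: rV3P; rewrite !mxE /=; ring. Qed.

Lemma crossZr (x y : 'rV[R]_3) t : cross x (t *: y) = t *: cross x y.
Proof. by apply: rV3P; rewrite !mxE /=; ring. Qed.

Lemma dotR_crossl x y : dotR x (cross x y) = 0.
Proof. by rewrite dotR3E !mxE /=; ring. Qed.

Lemma dotR_crossr x y : dotR y (cross x y) = 0.
Proof. by rewrite dotR3E !mxE /=; ring. Qed.

Lemma dotR_cross x y z w :
  dotR (cross x y) (cross z w) = dotR x z * dotR y w - dotR x w * dotR y z.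
Proof. by rewrite !dotR3E !mxE /=; ring. Qed.

Lemma cross_cross x y z : cross x (cross y z) = dotR x z *: y - dotR x y *: z.
Proof. by apply: rV3P; rewrite !dotR3E !mxE /=; ring. Qed.

Lemma cross_orth_eq0 x y : dotR x y = 0 -> (cross x y == 0) = (x == 0) || (y == 0).
Proof.
move=> xy; rewrite -!dotR_self_eq0 -mulf_eq0.
by rewrite dotR_cross (dotRC y) xy mulr0 subr0.
Qed.

Lemma comb_neq0 d (b c : 'rV[R]_d) t : dotR b c = 0 -> b != 0 -> b + t *: c != 0.
Proof.
move=> bc b0; apply/eqP => bc0.
have /esym/eqP := dotR_combl b c b t.
by rewrite bc0 dotR0 (dotRC c) bc mulr0 addr0 dotR_self_eq0 (negbTE b0).
Qed.

Lemma cross_comb_root_uniq (b c w : 'rV[R]_3) :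
  dotR b c = 0 -> b != 0 -> c != 0 -> w != 0 ->
  forall t1 t2, cross (b + t1 *: c) w = 0 -> cross (b + t2 *: c) w = 0 -> t1 = t2.
Proof.
move=> bc b0 c0 w0 t1 t2; rewrite !cross_combl => E1 E2.
have [//|t12] := eqVneq t1 t2.
have [bw cw] := affine_eq0 t12 E1 E2.
have /eqP := dotR_cross b w c w; rewrite bw cw dotR0 bc mul0r sub0r eq_sym oppr_eq0 mulf_eq0.
case/orP => /eqP orth.
- by move/eqP: bw; rewrite cross_orth_eq0 // (negbTE b0) (negbTE w0).
- by move/eqP: cw; rewrite cross_orth_eq0 1?dotRC // (negbTE c0) (negbTE w0).
Qed.

Lemma orth_pair_parallel (a b w : 'rV[R]_3) :
  b != 0 -> dotR a b = 0 -> dotR w b = 0 -> dotR w (cross a b) = 0 -> cross w a = 0.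
Proof.
move=> b0 ab wb wc.
(* [b × (a × b) = |b|^2 a], and [w] is parallel to [b × (a × b)]. *)
have /eqP : cross w (cross b (cross a b)) = 0 by rewrite cross_cross wc wb !scale0r subrr.
rewrite [cross b _]cross_cross (dotRC b a) ab scale0r subr0 crossZr scaler_eq0 dotR_self_eq0.
by rewrite (negbTE b0) => /eqP.
Qed.

Lemma exists_orth_neq0 (a : 'rV[R]_3) : exists2 b, b != 0 & dotR a b = 0.
Proof.
have [a01|a_neq] := boolP ((a 0 0 == 0) && (a 0 1 == 0)).
- exists (vec3 1 0 0); first by rewrite vec3_eq0 oner_eq0.
  by case/andP: a01 => /eqP a0 _; rewrite dotR3E !mxE /= a0; ring.
- exists (vec3 (- a 0 1) (a 0 0) 0); last by rewrite dotR3E !mxE /=; ring.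
  by rewrite vec3_eq0 oppr_eq0 eqxx andbT andbC.
Qed.

Lemma exists_nonparallel (I : finType) (A : {set I}) (w : I -> 'rV[R]_3) :
  {in A, forall i, w i != 0} -> exists2 a, a != 0 & {in A, forall i, cross (w i) a != 0}.
Proof.
move=> w0; set e1 := vec3 1 0 0; set e2 := vec3 0 1 0.
have e12 : dotR e1 e2 = 0 by rewrite dotR3E !mxE /=; ring.
have e1_neq0 : e1 != 0 by rewrite vec3_eq0 oner_eq0.
have e2_neq0 : e2 != 0 by rewrite vec3_eq0 eqxx oner_eq0.
have [t avoid] : exists t, forall i, ~ (i \in A /\ cross (e1 + t *: e2) (w i) = 0).
  apply: exists_avoiding => i; have [iA|iA] := boolP (i \in A); last by exists [::] => t [].
  have [r cov] := finite_roots_of_uniq (cross_comb_root_uniq e12 e1_neq0 e2_neq0 (w0 i iA)).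
  by exists r => t [_ /cov].
exists (e1 + t *: e2); first exact: comb_neq0.
move=> i iA; rewrite cross_anti oppr_eq0; apply/eqP => E; exact: (avoid i).
Qed.

Lemma exists_orth_generic (a : 'rV[R]_3) (I : finType) (A : {set I}) (w : I -> 'rV[R]_3) :
  a != 0 -> {in A, forall i, w i != 0 /\ cross (w i) a != 0} ->
  exists x, [/\ x != 0, dotR x a = 0 & {in A, forall i, dotR x (w i) != 0 /\ cross x (w i) != 0}].
Proof.
(* [b] and [c = a × b] span the plane orthogonal to [a]; on the line [b + t c]
   each unwanted condition holds for at most one [t]. *)
move=> a0 Aw; have [b b0 ab] := exists_orth_neq0 a.
set c := cross a b.
have c0 : c != 0 by rewrite cross_orth_eq0 // negb_or a0.
have bc : dotR b c = 0 by apply: dotR_crossr.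
pose bad i t := i \in A /\ (dotR (b + t *: c) (w i) = 0 \/ cross (b + t *: c) (w i) = 0).
have [t avoid] : exists t, forall i, ~ bad i t.
  apply: exists_avoiding => i; rewrite /bad.
  have [iA|iA] := boolP (i \in A); last by exists [::] => t [].
  have [w0 wa] := Aw i iA.
  have [r1 cov1] : exists r : seq R, forall t, dotR (b + t *: c) (w i) = 0 -> t \in r.
    apply: finite_roots_of_uniq => t1 t2; rewrite !dotR_combl => E1 E2.
    have [//|t12] := eqVneq t1 t2.
    have [bw cw] := affine_eq0 (M := R^o) t12 E1 E2.
    by move: wa; rewrite (orth_pair_parallel b0 ab) ?eqxx // dotRC.
  have [r2 cov2] := finite_roots_of_uniq (cross_comb_root_uniq bc b0 c0 w0).
  by exists (r1 ++ r2) => t [_ [/cov1|/cov2]] tr; rewrite mem_cat tr ?orbT.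
exists (b + t *: c); split; first exact: comb_neq0.
- by rewrite dotR_combl (dotRC b) ab (dotRC c) dotR_crossl mulr0 addr0.
- by move=> i iA; split; apply/eqP => E; apply: (avoid i); split=> //; [left|right].
Qed.

Definition vec2 (a b : R) : 'rV[R]_2 := \row_(i < 2) nth 0 [:: a; b] i.

Lemma rV2P (x y : 'rV[R]_2) : x 0 0 = y 0 0 -> x 0 1 = y 0 1 -> x = y.
Proof.
move=> E0 E1; apply/rowP => -[[|[|//]] lt_i2].
- by rewrite (_ : Ordinal lt_i2 = 0) //; apply: val_inj.
- by rewrite (_ : Ordinal lt_i2 = 1) //; apply: val_inj.
Qed.

Lemma vec2_eq0 a b : (vec2 a b == 0) = (a == 0) && (b == 0).
Proof.
apply/eqP/andP => [/rowP E|[/eqP-> /eqP->]]; last by apply: rV2P; rewrite !mxE.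
by move: (E 0) (E 1); rewrite !mxE /= => -> ->.
Qed.

Lemma dotR2E (x y : 'rV[R]_2) : dotR x y = x 0 0 * y 0 0 + x 0 1 * y 0 1.
Proof.
rewrite /dotR !big_ord_recr big_ord0 /= add0r.
by congr (_ * _ + _ * _); congr (_ 0 _); apply: val_inj.
Qed.

Lemma rV2_mul_eq0 (x : 'rV[R]_2) k : x != 0 -> x 0 0 * k = 0 -> x 0 1 * k = 0 -> k = 0.
Proof.
move=> x0 E0 E1; apply/eqP/negPn/negP => k0; move/eqP: x0; apply.
by apply: rV2P; rewrite mxE; apply: (mulIf k0); rewrite mul0r.
Qed.

Lemma orth2_transfer (z x y t : 'rV[R]_2) : z != 0 -> x != 0 ->
  dotR z x = 0 -> dotR z y = 0 -> dotR x t = 0 -> dotR y t = 0.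
Proof.
(* [x] and [y] are both orthogonal to [z], so their determinant [D] vanishes. *)
move=> z0 x0 zx zy xt; set D := x 0 0 * y 0 1 - x 0 1 * y 0 0.
have D0 : D = 0.
  apply: (rV2_mul_eq0 z0).
  - transitivity (y 0 1 * dotR z x - x 0 1 * dotR z y); last by rewrite zx zy; ring.
    by rewrite !dotR2E /D; ring.
  - transitivity (x 0 0 * dotR z y - y 0 0 * dotR z x); last by rewrite zx zy; ring.
    by rewrite !dotR2E /D; ring.
apply: (rV2_mul_eq0 x0).
- transitivity (y 0 0 * dotR x t + t 0 1 * D); last by rewrite xt D0; ring.
  by rewrite !dotR2E /D; ring.
- transitivity (y 0 1 * dotR x t - t 0 0 * D); last by rewrite xt D0; ring.
  by rewrite !dotR2E /D; ring.
Qed.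

Lemma orth_rep_complP (V : finType) (e : rel V) d (phi : V -> 'rV[R]_d) :
  orth_rep (compl e) phi <->
  (forall v, phi v != 0) /\ (forall u v, u != v -> (dotR (phi u) (phi v) == 0) = e u v).
Proof.
rewrite /orth_rep; split=> -[phi0 orth]; split=> // u v uv; have := orth u v uv;
  by rewrite /compl /= uv negbK.
Qed.

Section Forest.

Variables (V : finType) (e : rel V).
Hypotheses (e_sym : symmetric e) (e_irr : irreflexive e) (e_acyc : acyclic_graph e).

Lemma path_neighbour_head x p y :
  path e x p -> uniq (x :: p) -> y \in p -> e x y -> y = head x p.
Proof.
move=> xp uxp yp xy; rewrite -(nth_index x yp) -nth0.
case Ey: (index y p) => [//|j].
have jp : (j.+1 < size p)%N by rewrite -Ey index_mem.
have /negP[] := e_acyc (c := x :: take j.+2 p) ltac:(by rewrite /= size_takel).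
rewrite /ucycleb /= rcons_path -andbA; apply/and4P; split.
- by move: xp; rewrite -{1}(cat_take_drop j.+2 p) cat_path => /andP[].
- by rewrite -nth_last size_takel //= nth_take // -Ey nth_index // e_sym.
- by case/andP: uxp => x_notin_p _; apply: contra x_notin_p; apply: mem_take.
- by case/andP: uxp => _; apply: take_uniq.
Qed.

Lemma forest_leaf (S : {set V}) :
  S != set0 -> exists2 v, v \in S & {in S &, forall y z, e v y -> e v z -> y = z}.
Proof.
case/set0Pn => x0 x0S.
suff leaf x p : x \in S -> path e x p -> uniq (x :: p) ->
    exists2 v, v \in S & {in S &, forall y z, e v y -> e v z -> y = z}.
  exact: (leaf x0 [::]).
have [k] := ubnP (#|V| - size p); elim: k x p => // k IH x p.
rewrite ltnS => bound xS xp uxp.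
case: (pickP [pred y in S | e x y & y \notin x :: p]) => [y /and3P[yS xy y_new] | no_ext].
- have uyxp : uniq (y :: x :: p) by rewrite /= y_new.
  apply: (IH y (x :: p)) => //; last by rewrite /= e_sym xy.
  have := max_card (mem (y :: x :: p)); rewrite (card_uniqP uyxp) /=.
  by move: bound; set n := #|V|; lia.
- have in_p w : w \in S -> e x w -> w \in p.
    move=> wS xw; move: (no_ext w); rewrite /= wS xw /= => /negbFE.
    by rewrite inE => /orP[/eqP wx|//]; rewrite wx e_irr in xw.
  exists x => // y z yS zS xy xz.
  rewrite (path_neighbour_head xp uxp (in_p y yS xy) xy).
  by rewrite (path_neighbour_head xp uxp (in_p z zS xz) xz).
Qed.

(* Non-parallel images are what make [exists_orth_generic] applicable. *)
Definition generic_rep (S : {set V}) (phi : V -> 'rV[R]_3) :=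
  {in S, forall v, phi v != 0} /\
  {in S &, forall u w, u != w ->
    cross (phi u) (phi w) != 0 /\ (dotR (phi u) (phi w) == 0) = e u w}.

Lemma generic_rep_extend S phi v x :
  generic_rep S phi -> x != 0 ->
  {in S, forall z, cross x (phi z) != 0 /\ (dotR x (phi z) == 0) = e v z} ->
  generic_rep (v |: S) (fun y => if y == v then x else phi y).
Proof.
move=> [phi0 phi_gen] x0 x_gen; split.
- by move=> y; rewrite in_setU1; case: eqP => [_ _|_ /= yS] //; apply: phi0.
- move=> u w; rewrite !in_setU1.
  case: (eqVneq u v) => [->|uv] /=; case: (eqVneq w v) => [->|wv] /=.
  + by [].
  + by move=> _ wS _; apply: x_gen.
  + move=> uS _ _; have [cr dt] := x_gen u uS.
    by rewrite cross_anti oppr_eq0 dotRC e_sym.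
  + by move=> uS wS; apply: phi_gen.
Qed.

Lemma exists_leaf_vector S phi v :
  generic_rep S phi -> {in S &, forall y z, e v y -> e v z -> y = z} ->
  exists2 x, x != 0 &
    {in S, forall z, cross x (phi z) != 0 /\ (dotR x (phi z) == 0) = e v z}.
Proof.
move=> [phi0 phi_gen] leaf.
case: (pickP [pred u in S | e v u]) => [u /andP[uS vu] | no_nb].
- have Aw : {in S :\ u, forall z, phi z != 0 /\ cross (phi z) (phi u) != 0}.
    move=> z /setD1P[zu zS]; split; first exact: phi0.
    by have [] := phi_gen z u zS uS zu.
  have [x [x0 xu x_gen]] := exists_orth_generic (phi0 u uS) Aw.
  exists x => // z zS; have [->|zu] := eqVneq z u.
  + by rewrite xu eqxx vu cross_orth_eq0 // negb_or x0 phi0.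
  + have [dz cz] := x_gen z ltac:(by rewrite in_setD1 zu zS).
    split=> //; rewrite (negbTE dz); apply/esym/negP => vz.
    by move: zu; rewrite (leaf z u zS uS vz vu) eqxx.
- have [a a0 a_gen] := exists_nonparallel (A := S) (w := phi) phi0.
  have [x [x0 _ x_gen]] := exists_orth_generic a0 (A := S) (w := phi)
    (fun z zS => conj (phi0 z zS) (a_gen z zS)).
  exists x => // z zS; have [dz cz] := x_gen z zS; split => //.
  by rewrite (negbTE dz); have := no_nb z; rewrite /= zS /= => ->.
Qed.

Lemma exists_generic_rep (S : {set V}) : exists phi, generic_rep S phi.
Proof.
have [n] := ubnP #|S|; elim: n S => // n IH S; rewrite ltnS => Sn.
have [->|S_nonempty] := eqVneq S set0.
  by exists (fun=> 0); split=> [?|? ?]; rewrite inE.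
have [v vS leaf] := forest_leaf S_nonempty.
have [phi phi_gen] := IH (S :\ v) ltac:(by move: Sn; rewrite (cardsD1 v) vS).
have leaf' : {in S :\ v &, forall y z, e v y -> e v z -> y = z}.
  by move=> y z /setD1P[_ yS] /setD1P[_ zS]; apply: leaf.
have [x x0 x_gen] := exists_leaf_vector phi_gen leaf'.
exists (fun y => if y == v then x else phi y).
by rewrite -(setD1K vS); apply: generic_rep_extend.
Qed.

Lemma forest_compl_rep3 : has_orth_rep (compl e) 3.
Proof.
have [phi [phi0 phi_gen]] := exists_generic_rep [set: V].
exists phi; apply/orth_rep_complP; split=> [v|u v uv]; first exact: phi0.
by have [] := phi_gen u v (in_setT u) (in_setT v) uv.
Qed.

Hypothesis e_conn : connected_graph e.

Section Plane.

Variable psi : V -> 'rV[R]_2.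
Hypothesis psi0 : forall v, psi v != 0.
Hypothesis psi_orth : forall u v, u != v -> (dotR (psi u) (psi v) == 0) = e u v.

Let perp u v := dotR (psi u) (psi v) == 0.

Lemma perp_sym u v : perp u v = perp v u.
Proof. by rewrite /perp dotRC. Qed.

Lemma perp_irr v : perp v v = false.
Proof. by rewrite /perp dotR_self_eq0 (negbTE (psi0 v)). Qed.

Lemma edge_perpE u v : u != v -> e u v = perp u v.
Proof. by move=> uv; rewrite /perp psi_orth. Qed.

Lemma perp_edge u v : e u v -> perp u v.
Proof. by move=> uv; rewrite -edge_perpE //; apply: contraTneq uv => ->; rewrite e_irr. Qed.

Lemma perp_transfer z x y t : perp z x -> perp z y -> perp x t -> perp y t.
Proof.
by move=> /eqP zx /eqP zy /eqP xt; apply/eqP; apply: (orth2_transfer (psi0 z) (psi0 x)).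
Qed.

Lemma edge_cover u v : e u v -> forall w, perp w u || perp w v.
Proof.
move=> uv w; pose cover := [pred x | perp x u || perp x v].
have step x y : e x y -> cover x -> cover y.
  move=> xy /orP[xu|xv]; apply/orP; [right|left].
  - by apply: perp_transfer xu (perp_edge xy) (perp_edge uv).
  - by apply: perp_transfer xv (perp_edge xy) (perp_edge _); rewrite e_sym.
have cl : closed e cover.
  by move=> x y xy; apply/idP/idP; apply: step; rewrite // e_sym.
by have := closed_connect cl (e_conn u w); rewrite !inE (perp_edge uv) orbT => <-.
Qed.

Lemma star_of_lonely u v : e u v -> (forall w, perp w v -> w = u) -> is_star e.
Proof.
move=> uv lonely.
have perp_u w : w != u -> perp w u.
  by move=> wu; case/orP: (edge_cover uv w) => // /lonely wu'; rewrite wu' eqxx in wu.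
exists u => x y; case: (eqVneq x y) => [<-|xy]; first by rewrite e_irr.
rewrite -psi_orth // -/(perp x y).
case: (eqVneq x u) => [xu|xu]; case: (eqVneq y u) => [yu|yu] /=.
- by rewrite xu yu eqxx in xy.
- by rewrite xu perp_sym perp_u.
- by rewrite yu perp_u.
- apply/negbTE/negP => xy_perp.
  have ux : perp u x by rewrite perp_sym perp_u.
  have uy : perp u y by rewrite perp_sym perp_u.
  by move: (perp_transfer ux uy xy_perp); rewrite perp_irr.
Qed.

Lemma star_of_edge u v : e u v -> is_star e.
Proof.
move=> uv; have vu : e v u by rewrite e_sym.
case: (pickP [pred p | (p != u) && perp p v]) => [p /andP[pu pv] | none_v]; last first.
  apply: (star_of_lonely uv) => w wv; apply/eqP.
  by move: (none_v w); rewrite /= wv andbT => /negbFE.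
case: (pickP [pred q | (q != v) && perp q u]) => [q /andP[qv qu] | none_u]; last first.
  apply: (star_of_lonely vu) => w wu; apply/eqP.
  by move: (none_u w); rewrite /= wu andbT => /negbFE.
(* Otherwise u v p q is a 4-cycle. *)
have pq : perp p q.
  by apply: (perp_transfer (perp_edge vu)); rewrite perp_sym.
have neq_perp x y : perp x y -> x != y by apply: contraTneq => ->; rewrite perp_irr.
have p_neq_q : p != q.
  apply: contraTneq qu => <-; apply/negP => pu_perp.
  by move: (perp_transfer pu_perp pv (perp_edge uv)); rewrite perp_irr.
have vp : perp v p by rewrite perp_sym.
have uq : perp u q by rewrite perp_sym.
have up : u != p by rewrite eq_sym.
have vq : v != q by rewrite eq_sym.
have edge_of_perp x y : perp x y -> e x y by move=> xy; rewrite edge_perpE ?neq_perp.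
exfalso; apply: (negP (e_acyc (c := [:: u; v; p; q]) isT)).
rewrite /ucycleb /= uv (edge_of_perp _ _ vp) (edge_of_perp _ _ pq) (edge_of_perp _ _ qu).
rewrite /= !inE !negb_or (neq_perp _ _ (perp_edge uv)) up (neq_perp _ _ uq).
by rewrite (neq_perp _ _ vp) vq p_neq_q.
Qed.

End Plane.

Lemma compl_rep2_star : (exists u v, e u v) -> has_orth_rep (compl e) 2 -> is_star e.
Proof.
move=> [u [v uv]] [psi /orth_rep_complP[psi0 psi_orth]].
exact: star_of_edge psi0 psi_orth _ _ uv.
Qed.

End Forest.

Lemma connected_edge (V : finType) (e : rel V) :
  connected_graph e -> (1 < #|V|)%N -> exists u v, e u v.
Proof.
move=> e_conn /card_gt1P[x [y [_ _ xy]]].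
have /connectP[s xs y_last] := e_conn x y.
case: s xs y_last => [_ yx|z s /= /andP[xz _] _]; first by rewrite yx eqxx in xy.
by exists x, z.
Qed.

Lemma compl_rep_dim_gt1 (V : finType) (e : rel V) d u v :
  irreflexive e -> e u v -> has_orth_rep (compl e) d -> (1 < d)%N.
Proof.
move=> e_irr uv [phi /orth_rep_complP[phi0 phi_orth]].
have uv' : u != v by apply: contraTneq uv => ->; rewrite e_irr.
case: d phi phi0 phi_orth => [|[|//]] phi phi0 phi_orth.
  by move: (phi0 u); rewrite thinmx0 eqxx.
have row1_eq0 (x : 'rV[R]_1) : x 0 0 = 0 -> x = 0.
  by move=> x0; apply/rowP => i; rewrite [i]ord1 mxE.
move: (phi_orth u v uv'); rewrite uv /dotR big_ord1 mulf_eq0.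
case/orP => /eqP/row1_eq0 phi_eq0.
- by move: (phi0 u); rewrite phi_eq0 eqxx.
- by move: (phi0 v); rewrite phi_eq0 eqxx.
Qed.

Lemma star_compl_rep2 (V : finType) (e : rel V) : is_star e -> has_orth_rep (compl e) 2.
Proof.
move=> [c star]; exists (fun w => if w == c then vec2 1 0 else vec2 0 1).
apply/orth_rep_complP; split=> [w|u w uw].
  by case: (w == c); rewrite vec2_eq0 eqxx oner_eq0.
rewrite star uw /= dotR2E.
case: (eqVneq u c) => [uc|uc]; case: (eqVneq w c) => [wc|wc] /=; rewrite ?mxE /=.
- by rewrite uc wc eqxx in uw.
- by rewrite mulr0 mul0r addr0 eqxx.
- by rewrite mulr0 mul0r addr0 eqxx.
- by rewrite mul0r mulr1 add0r oner_eq0.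
Qed.

Theorem proposition4p1 (V : finType) (e : rel V) (n : nat) :
  simple_graph e -> #|V| = n -> (2 <= n)%N -> is_tree e ->
  (is_star e -> mvr_eq (compl e) 2) /\ (~ is_star e -> mvr_eq (compl e) 3).
Proof.
move=> [e_sym e_irr] cardV n_ge2 [e_conn e_acyc].
have [u [v uv]] : exists u v, e u v by apply: connected_edge => //; rewrite cardV.
have dim_gt1 := compl_rep_dim_gt1 e_irr uv.
split=> [star | not_star].
  by split=> [|d /dim_gt1]; first exact: star_compl_rep2.
split=> [|d rep]; first exact: forest_compl_rep3.
rewrite leqNgt; apply/negP => d_lt3.
have d2 : d = 2%N by have := dim_gt1 _ rep; lia.
subst d; apply: not_star.
by apply: compl_rep2_star e_sym e_irr e_acyc e_conn _ rep; exists u, v.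
Qed.
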